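(* Let $\mathfrak{M}=\bigotimes_{i\in I}\mathfrak{P}_i$ be a Segre product of projective spaces $\mathfrak{P}_i$ ($I$ countable, $|I|\ge2$) and let $\mathcal{H}$ be a spiky hyperplane of $\mathfrak{M}$. Then the complement $\mathfrak{M}\setminus\mathcal{H}$ (with its parallelism $\parallel_\mathcal{H}$) is not isomorphic to any Segre product of affine spaces.
   Context: A partial linear space is a pair $(S,\mathcal{L})$ of points and lines such that every line has at least two points, every point lies on a line, two distinct lines share at most one point; it is a linear space if any two points are collinear. A projective space is a linear space with lines of at least $3$ points which is Veblenian (for two distinct lines $L_1,L_2$ through $p$ and two distinct lines $K_1,K_2$ not through $p$ each meeting $L_1,L_2$, the lines $K_1,K_2$ meet). Subspace: any line meeting it in at least two points lies in it; hyperplane: proper subspace meeting every line; a set $X$ is spiky if every point of $X$ is collinear with some point not in $X$. Segre product: points $\prod S_i$, lines $a[i/l]=\{a':a'_i\in l,\ a'_s=a_s\ (s\ne i)\}$. For a hyperplane $\mathcal{H}$, each line $L\not\subseteq\mathcal{H}$ meets $\mathcal{H}$ in a unique point $L^\infty$; $\mathfrak{M}\setminus\mathcal{H}$ has points $S\setminus\mathcal{H}$, lines $L\setminus\mathcal{H}$ ($L\not\subseteq\mathcal{H}$), parallelism $L\parallel_\mathcal{H}K$ iff $L^\infty=K^\infty$. An affine space is $(S,\mathcal{L},\parallel)$ with $(S,\mathcal{L})$ a linear space, $\parallel$ an equivalence on lines such that parallel lines sharing a point coincide and through every point there is a line parallel to any given line, satisfying the Tamaschke Bedingung and the parallelogram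 completion condition. The Segre product of structures $(S_i,\mathcal{L}_i,\parallel_i)$ is the Segre product of $(S_i,\mathcal{L}_i)$ with parallelism: $a[i/l]\parallel b[j/k]$ iff $i=j$ and $l\parallel_i k$. Isomorphism means a bijection of points mapping lines onto lines and preserving parallelism, both ways. *)

(* Incidence structures are given by a point type P
   and a predicate Lin on subsets (P -> Prop) telling which subsets are lines.
   Lines are compared extensionally via [same]. *)

Definition same {P : Type} (L K : P -> Prop) : Prop := forall x, L x <-> K x.

Definition partial_linear_space (P : Type) (Lin : (P -> Prop) -> Prop) : Prop :=
  (forall L, Lin L -> exists x y, x <> y /\ L x /\ L y) /\
  (forall p, exists L, Lin L /\ L p) /\
  (forall L K, Lin L -> Lin K -> ~ same L K ->
     forall x y, L x -> L y -> K x -> K y -> x = y).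

Definition collinear {P : Type} (Lin : (P -> Prop) -> Prop) (x y : P) : Prop :=
  exists L, Lin L /\ L x /\ L y.

Definition linear_space (P : Type) (Lin : (P -> Prop) -> Prop) : Prop :=
  partial_linear_space P Lin /\ forall x y : P, collinear Lin x y.

Definition meet {P : Type} (L K : P -> Prop) : Prop := exists x, L x /\ K x.

Definition veblenian (P : Type) (Lin : (P -> Prop) -> Prop) : Prop :=
  forall (p : P) L1 L2 K1 K2,
    Lin L1 -> Lin L2 -> Lin K1 -> Lin K2 ->
    ~ same L1 L2 -> L1 p -> L2 p ->
    ~ same K1 K2 -> ~ K1 p -> ~ K2 p ->
    meet K1 L1 -> meet K1 L2 -> meet K2 L1 -> meet K2 L2 ->
    meet K1 K2.

Definition projective_space (P : Type) (Lin : (P -> Prop) -> Prop) : Prop :=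
  linear_space P Lin /\
  (forall L, Lin L -> exists x y z, L x /\ L y /\ L z /\ x <> y /\ x <> z /\ y <> z) /\
  veblenian P Lin.

Definition subspace {P : Type} (Lin : (P -> Prop) -> Prop) (X : P -> Prop) : Prop :=
  forall L, Lin L -> (exists x y, x <> y /\ L x /\ L y /\ X x /\ X y) ->
    forall z, L z -> X z.

Definition hyperplane {P : Type} (Lin : (P -> Prop) -> Prop) (X : P -> Prop) : Prop :=
  subspace Lin X /\ (exists x, ~ X x) /\ (forall L, Lin L -> meet L X).

Definition spiky {P : Type} (Lin : (P -> Prop) -> Prop) (X : P -> Prop) : Prop :=
  forall x, X x -> exists y, ~ X y /\ collinear Lin x y.

(* Segre product: points are dependent functions, lines are a[i/l]. *)
Definition segre_line {I : Type} {P : I -> Type} (i : I) (a : forall s, P s)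
  (l : P i -> Prop) : (forall s, P s) -> Prop :=
  fun x => l (x i) /\ forall s, s <> i -> x s = a s.

Definition segre_lines {I : Type} {P : I -> Type}
  (Lin : forall i, (P i -> Prop) -> Prop) : ((forall s, P s) -> Prop) -> Prop :=
  fun Y => exists i a l, Lin i l /\ same Y (segre_line i a l).

Definition segre_par {I : Type} {P : I -> Type}
  (Lin : forall i, (P i -> Prop) -> Prop)
  (Par : forall i, (P i -> Prop) -> (P i -> Prop) -> Prop)
  : ((forall s, P s) -> Prop) -> ((forall s, P s) -> Prop) -> Prop :=
  fun Y Y' => exists i a b l k, Lin i l /\ Lin i k /\ Par i l k /\
     same Y (segre_line i a l) /\ same Y' (segre_line i b k).

(* Complement of a hyperplane H: points not in H, lines L \ H for L not in H,
   parallelism L\H || K\H iff L^oo = K^oo (the point where L resp. K meets H). *)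
Definition cpoint {P : Type} (H : P -> Prop) : Type := {x : P | ~ H x}.

Definition infty_pt {P : Type} (H L : P -> Prop) (p : P) : Prop := L p /\ H p.

Definition restricts {P : Type} (Lin : (P -> Prop) -> Prop) (H : P -> Prop)
  (Y : cpoint H -> Prop) (L : P -> Prop) : Prop :=
  Lin L /\ ~ (forall x, L x -> H x) /\ forall y : cpoint H, Y y <-> L (proj1_sig y).

Definition complement_lines {P : Type} (Lin : (P -> Prop) -> Prop) (H : P -> Prop)
  : (cpoint H -> Prop) -> Prop :=
  fun Y => exists L, restricts Lin H Y L.

Definition complement_par {P : Type} (Lin : (P -> Prop) -> Prop) (H : P -> Prop)
  : (cpoint H -> Prop) -> (cpoint H -> Prop) -> Prop :=
  fun Y Y' => exists L K, restricts Lin H Y L /\ restricts Lin H Y' K /\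
     exists p, infty_pt H L p /\ infty_pt H K p.

Definition noncollinear {P : Type} (Lin : (P -> Prop) -> Prop) (a b c : P) : Prop :=
  ~ exists L, Lin L /\ L a /\ L b /\ L c.

Definition affine_space (P : Type) (Lin : (P -> Prop) -> Prop)
  (Par : (P -> Prop) -> (P -> Prop) -> Prop) : Prop :=
  linear_space P Lin /\
  (forall L K, Par L K -> Lin L /\ Lin K) /\
  (forall L, Lin L -> Par L L) /\
  (forall L K, Par L K -> Par K L) /\
  (forall L K M, Par L K -> Par K M -> Par L M) /\
  (forall L K, Par L K -> meet L K -> same L K) /\
  (forall L p, Lin L -> exists K, Lin K /\ Par K L /\ K p) /\
  (forall a b c Lab Lac Lbc L, noncollinear Lin a b c ->
     Lin Lab -> Lab a -> Lab b -> Lin Lac -> Lac a -> Lac c ->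
     Lin Lbc -> Lbc b -> Lbc c -> Lin L -> Par L Lab -> meet L Lac ->
     meet L Lbc) /\
  (forall a b c Lab Lac L K, noncollinear Lin a b c ->
     Lin Lab -> Lab a -> Lab b -> Lin Lac -> Lac a -> Lac c ->
     Lin L -> Par L Lab -> L c -> Lin K -> Par K Lac -> K b ->
     meet L K).

Definition image {X Y : Type} (f : X -> Y) (Z : X -> Prop) : Y -> Prop :=
  fun y => exists x, Z x /\ f x = y.

Definition preimage {X Y : Type} (f : X -> Y) (W : Y -> Prop) : X -> Prop :=
  fun x => W (f x).

Definition isomorphism {X Y : Type}
  (LX : (X -> Prop) -> Prop) (PX : (X -> Prop) -> (X -> Prop) -> Prop)
  (LY : (Y -> Prop) -> Prop) (PY : (Y -> Prop) -> (Y -> Prop) -> Prop)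
  (f : X -> Y) : Prop :=
  (exists g : Y -> X, (forall x, g (f x) = x) /\ (forall y, f (g y) = y)) /\
  (forall Z, LX Z -> LY (image f Z)) /\
  (forall W, LY W -> LX (preimage f W)) /\
  (forall Z Z', LX Z -> LX Z' -> (PX Z Z' <-> PY (image f Z) (image f Z'))) /\
  (forall W W', LY W -> LY W' -> (PY W W' <-> PX (preimage f W) (preimage f W'))).

Definition countable (I : Type) : Prop := exists f : I -> nat, forall x y, f x = f y -> x = y.

(* If M \ H were a Segre product of affine spaces, then through every point
   there would be a line parallel to any given line.  Transported back to
   M \ H, a parallel through x ∉ H to the affine part of a line N ⊄ H has the
   same point at infinity as N; so every point of H lying on a line not
   contained in H is collinear with every point off H.  As H is spiky, this
   applies to every point of H.  But with at least two factors there are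
   p ∈ H and x ∉ H differing in two coordinates, hence not collinear. *)

From Stdlib Require Import Classical ClassicalEpsilon FunctionalExtensionality
  PropExtensionality Eqdep.

Definition thick {P : Type} (Lin : (P -> Prop) -> Prop) : Prop :=
  forall L, Lin L -> exists x y z, L x /\ L y /\ L z /\ x <> y /\ x <> z /\ y <> z.

Definition parallels_exist {P : Type} (Lin : (P -> Prop) -> Prop)
  (Par : (P -> Prop) -> (P -> Prop) -> Prop) : Prop :=
  forall L p, Lin L -> exists K, Lin K /\ Par K L /\ K p.

Lemma thick_avoid {P : Type} (Lin : (P -> Prop) -> Prop) L (a b : P) :
  thick Lin -> Lin L -> exists t, L t /\ t <> a /\ t <> b.
Proof.
  intros Hthick HL.
  destruct (Hthick L HL) as [x [y [z [Lx [Ly [Lz [dxy [dxz dyz]]]]]]]].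
  destruct (classic (x = a)) as [<-|xa]; destruct (classic (x = b)) as [<-|xb].
  - exists y; auto.
  - destruct (classic (y = b)) as [<-|yb]; [exists z | exists y]; auto.
  - destruct (classic (y = a)) as [<-|ya]; [exists z | exists y]; auto.
  - exists x; auto.
Qed.

Lemma same_of_two_common_points {P : Type} (Lin : (P -> Prop) -> Prop) L K x y :
  partial_linear_space P Lin -> Lin L -> Lin K -> x <> y ->
  L x -> L y -> K x -> K y -> same L K.
Proof.
  intros [_ [_ Honce]] HL HK dxy Lx Ly Kx Ky.
  apply NNPP; intro nLK. exact (dxy (Honce L K HL HK nLK x y Lx Ly Kx Ky)).
Qed.

Lemma affine_parallels_exist (P : Type) Lin Par :
  affine_space P Lin Par -> parallels_exist Lin Par.
Proof. intros (_ & _ & _ & _ & _ & _ & Hpar & _). exact Hpar. Qed.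

Lemma image_preimage {X Y : Type} (f : X -> Y) (g : Y -> X) (W : Y -> Prop) :
  (forall y, f (g y) = y) -> image f (preimage f W) = W.
Proof.
  intro fg. apply functional_extensionality; intro y.
  apply propositional_extensionality; split.
  - intros [x [Wfx <-]]. exact Wfx.
  - intro Wy. exists (g y). unfold preimage. rewrite fg. auto.
Qed.

Lemma parallels_exist_iso {X Y : Type} LX PX LY PY (f : X -> Y) :
  isomorphism LX PX LY PY f -> parallels_exist LY PY -> parallels_exist LX PX.
Proof.
  intros [[g [_ fg]] [HLX [HLY [HPX _]]]] Hpar Z x HZ.
  destruct (Hpar (image f Z) (f x) (HLX Z HZ)) as [W [HW [WZ Wfx]]].
  exists (preimage f W). split; [now apply HLY|]. split; [|exact Wfx].
  apply HPX; [now apply HLY | exact HZ |].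
  rewrite (image_preimage f g W fg). exact WZ.
Qed.

Section HyperplaneComplement.

Variables (P : Type) (Lin : (P -> Prop) -> Prop) (H : P -> Prop).
Hypothesis Hpls : partial_linear_space P Lin.
Hypothesis Hthick : thick Lin.
Hypothesis Hsub : subspace Lin H.

Lemma subspace_line_meets_once N y a b :
  Lin N -> N y -> ~ H y -> N a -> N b -> H a -> H b -> a = b.
Proof.
  intros HN Ny Hy Na Nb Ha Hb. apply NNPP; intro dab.
  apply Hy. apply (Hsub N HN); auto. exists a, b; auto.
Qed.

Lemma line_two_points_off_subspace N :
  Lin N -> ~ (forall x, N x -> H x) ->
  exists u v, u <> v /\ N u /\ N v /\ ~ H u /\ ~ H v.
Proof.
  intros HN HNH.
  destruct (not_all_ex_not _ _ HNH) as [y Hy].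
  apply imply_to_and in Hy. destruct Hy as [Ny Hy].
  destruct (thick_avoid Lin N y y Hthick HN) as [z [Nz [zy _]]].
  destruct (classic (H z)) as [Hz|Hz]; [|exists y, z; auto].
  destruct (thick_avoid Lin N y z Hthick HN) as [w [Nw [wy wz]]].
  exists y, w. repeat split; auto.
  intro Hw. exact (wz (subspace_line_meets_once N y w z HN Ny Hy Nw Nz Hw Hz)).
Qed.

Lemma restricts_same Y L K : restricts Lin H Y L -> restricts Lin H Y K -> same L K.
Proof.
  intros [HL [LH YL]] [HK [_ YK]].
  destruct (line_two_points_off_subspace L HL LH) as [u [v [duv [Lu [Lv [Hu Hv]]]]]].
  apply (same_of_two_common_points Lin L K u v Hpls HL HK duv Lu Lv).
  - apply (YK (exist _ u Hu)), (YL (exist _ u Hu)). exact Lu.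
  - apply (YK (exist _ v Hv)), (YL (exist _ v Hv)). exact Lv.
Qed.

Lemma complement_parallels_collinear N p x0 :
  parallels_exist (complement_lines Lin H) (complement_par Lin H) ->
  Lin N -> N p -> H p -> ~ (forall x, N x -> H x) -> ~ H x0 -> collinear Lin p x0.
Proof.
  intros Hpar HN Np Hp NH Hx0.
  set (Y := fun c : cpoint H => N (proj1_sig c)).
  assert (RN : restricts Lin H Y N) by (split; [exact HN | split; [exact NH | tauto]]).
  destruct (Hpar Y (exist _ x0 Hx0) (ex_intro _ N RN)) as [K [_ [KY Kx0]]].
  destruct KY as [L' [K' [[HL' [_ KL']] [RK' [p' [[L'p' Hp'] [K'p' _]]]]]]].
  assert (Np' : N p') by (apply (restricts_same Y K' N RK' RN); exact K'p').
  destruct (line_two_points_off_subspace N HN NH) as [y [_ [_ [Ny [_ [Hy _]]]]]].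
  rewrite <- (subspace_line_meets_once N y p' p HN Ny Hy Np' Np Hp' Hp).
  exists L'. repeat split; auto. exact (proj1 (KL' (exist _ x0 Hx0)) Kx0).
Qed.

End HyperplaneComplement.

Section SegreProduct.

Context {I : Type} {P : I -> Type}.

Definition upd (a : forall s, P s) (i : I) (z : P i) : forall s, P s :=
  fun s => match excluded_middle_informative (i = s) with
           | left e => eq_rect i P z s e
           | right _ => a s end.

Lemma upd_eq a i z : upd a i z i = z.
Proof.
  unfold upd. destruct (excluded_middle_informative (i = i)) as [e|n].
  - symmetry. apply Eqdep.EqdepTheory.eq_rect_eq.
  - now exfalso.
Qed.

Lemma upd_neq a i z s : s <> i -> upd a i z s = a s.
Proof.
  intro n. unfold upd. destruct (excluded_middle_informative (i = s)) as [e|_].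
  - subst. now exfalso.
  - reflexivity.
Qed.

Lemma eq_off_coord (u v : forall s, P s) i :
  u i = v i -> (forall s, s <> i -> u s = v s) -> u = v.
Proof.
  intros Hi Ho. apply functional_extensionality_dep. intro s.
  destruct (classic (s = i)) as [->|n]; auto.
Qed.

Lemma segre_line_upd i a (l : P i -> Prop) z : l z -> segre_line i a l (upd a i z).
Proof. intro lz. split; [now rewrite upd_eq | intros s n; now apply upd_neq]. Qed.

Variable Lin : forall i, (P i -> Prop) -> Prop.

Lemma segre_lines_segre_line i a l : Lin i l -> segre_lines Lin (segre_line i a l).
Proof. intro Hl. exists i, a, l. split; [exact Hl | intro; tauto]. Qed.

Lemma segre_noncollinear (p x : forall s, P s) i j :
  i <> j -> p i <> x i -> p j <> x j -> ~ collinear (segre_lines Lin) p x.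
Proof.
  intros Hij Hi Hj [L [[k [b [m [_ Hs]]]] [Lp Lx]]].
  apply Hs in Lp. apply Hs in Lx. destruct Lp as [_ Hp]. destruct Lx as [_ Hx].
  destruct (classic (i = k)) as [<-|n].
  - apply Hj. now rewrite (Hp j (not_eq_sym Hij)), (Hx j (not_eq_sym Hij)).
  - apply Hi. now rewrite (Hp i n), (Hx i n).
Qed.

Lemma segre_thick : (forall i, thick (Lin i)) -> thick (segre_lines Lin).
Proof.
  intros Hthick N [i [a [l [Hl Hs]]]].
  destruct (Hthick i l Hl) as [z1 [z2 [z3 [h1 [h2 [h3 [d12 [d13 d23]]]]]]]].
  assert (Df : forall z z', z <> z' -> upd a i z <> upd a i z').
  { intros z z' d e. apply d. now rewrite <- (upd_eq a i z), <- (upd_eq a i z'), e. }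
  exists (upd a i z1), (upd a i z2), (upd a i z3).
  repeat split; try (apply Hs, segre_line_upd; assumption); auto.
Qed.

(* Two lines through u <> v have the same direction i (otherwise u, v would
   agree everywhere), and their factor lines share u i <> v i. *)
Lemma segre_lines_meet_once N K u v :
  (forall i, partial_linear_space (P i) (Lin i)) ->
  segre_lines Lin N -> segre_lines Lin K -> u <> v ->
  N u -> N v -> K u -> K v -> same N K.
Proof.
  intros Hpls [i [a [l [Hl Hs]]]] [k [b [m [Hm Hs']]]] Huv Nu Nv Ku Kv.
  apply Hs in Nu, Nv. apply Hs' in Ku, Kv.
  destruct Nu as [lu ua], Nv as [lv va], Ku as [mu ub], Kv as [mv vb].
  destruct (classic (i = k)) as [<-|n].
  2:{ exfalso. apply Huv. apply (eq_off_coord u v i).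
      - now rewrite (ub i n), (vb i n).
      - intros s ns. now rewrite (ua s ns), (va s ns). }
  assert (Hi : u i <> v i).
  { intro e. apply Huv, (eq_off_coord u v i e). intros s ns. now rewrite (ua s ns), (va s ns). }
  pose proof (same_of_two_common_points _ l m _ _ (Hpls i) Hl Hm Hi lu lv mu mv) as Hlm.
  intro z. rewrite (Hs z), (Hs' z). split; intros [lz za]; split.
  - now apply Hlm.
  - intros s ns. rewrite (za s ns), <- (ua s ns). exact (ub s ns).
  - now apply Hlm.
  - intros s ns. rewrite (za s ns), <- (ub s ns). exact (ua s ns).
Qed.

Lemma segre_partial_linear_space :
  inhabited I -> (forall i, partial_linear_space (P i) (Lin i)) -> (forall i, thick (Lin i)) ->
  partial_linear_space (forall s, P s) (segre_lines Lin).
Proof.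
  intros [i0] Hpls Hthick. split; [|split].
  - intros N HN.
    destruct (segre_thick Hthick N HN) as [x [y [_ [Nx [Ny [_ [dxy _]]]]]]].
    exists x, y; auto.
  - intro p. destruct (proj1 (proj2 (Hpls i0)) (p i0)) as [l [Hl lp]].
    exists (segre_line i0 p l). split; [now apply segre_lines_segre_line|].
    split; [exact lp | tauto].
  - intros N K HN HK nNK u v Nu Nv Ku Kv. apply NNPP; intro duv.
    exact (nNK (segre_lines_meet_once N K u v Hpls HN HK duv Nu Nv Ku Kv)).
Qed.

Lemma segre_parallels_exist (Par : forall i, (P i -> Prop) -> (P i -> Prop) -> Prop) :
  (forall i, parallels_exist (Lin i) (Par i)) ->
  parallels_exist (segre_lines Lin) (segre_par Lin Par).
Proof.
  intros Hpar W p [j [a [l [Hl HW]]]].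
  destruct (Hpar j l (p j) Hl) as [k [Hk [Hkl kp]]].
  exists (segre_line j p k). split; [now apply segre_lines_segre_line|].
  split; [|split; [exact kp | tauto]].
  exists j, p, a, k, l. do 3 (split; [assumption|]). split; [intro; tauto | exact HW].
Qed.

Section Hyperplane.

Hypothesis Hpls : forall i, partial_linear_space (P i) (Lin i).
Hypothesis Hthick : forall i, thick (Lin i).
Variable H : (forall s, P s) -> Prop.
Hypothesis Hhyp : hyperplane (segre_lines Lin) H.

Lemma hyperplane_meets_coordinate_line x i :
  ~ H x -> exists q, H q /\ q i <> x i /\ forall s, s <> i -> q s = x s.
Proof.
  intro Hx. destruct (proj1 (proj2 (Hpls i)) (x i)) as [l [Hl lx]].
  destruct (proj2 (proj2 Hhyp) _ (segre_lines_segre_line i x l Hl)) as [q [[_ qx] Hq]].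
  exists q. repeat split; auto.
  intro e. apply Hx. now rewrite <- (eq_off_coord q x i e qx).
Qed.

(* With x ∉ H, let q, q' ∈ H differ from x only at i, resp. j, and let r be q
   with its j-th coordinate replaced by some t ∉ {x j, q' j}.  If r ∈ H then
   (r, x) is the pair, otherwise (q', r) is. *)
Lemma hyperplane_noncollinear_pair (i j : I) :
  i <> j -> exists p x, H p /\ ~ H x /\ ~ collinear (segre_lines Lin) p x.
Proof.
  intro Hij. destruct (proj1 (proj2 Hhyp)) as [x Hx].
  destruct (hyperplane_meets_coordinate_line x i Hx) as [q [Hq [qi qx]]].
  destruct (hyperplane_meets_coordinate_line x j Hx) as [q' [Hq' [q'j q'x]]].
  destruct (proj1 (proj2 (Hpls j)) (x j)) as [m [Hm _]].
  destruct (thick_avoid _ m (x j) (q' j) (Hthick j) Hm) as [t [_ [tx tq']]].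
  destruct (classic (H (upd q j t))) as [Hr|Hr].
  - exists (upd q j t), x. repeat split; auto.
    apply (segre_noncollinear _ _ i j Hij); rewrite ?upd_eq, ?upd_neq by exact Hij; auto.
  - exists q', (upd q j t). repeat split; auto.
    apply (segre_noncollinear _ _ i j Hij); rewrite ?upd_eq, ?upd_neq by exact Hij; auto.
    now rewrite (q'x i Hij).
Qed.

End Hyperplane.

End SegreProduct.

Theorem proposition4p18 (I : Type) (P : I -> Type)
  (Lin : forall i, (P i -> Prop) -> Prop)
  (HI : countable I) (HI2 : exists i j : I, i <> j)
  (Hproj : forall i, projective_space (P i) (Lin i))
  (H : (forall i, P i) -> Prop)
  (Hhyp : hyperplane (segre_lines Lin) H)
  (Hspiky : spiky (segre_lines Lin) H) :
  forall (J : Type) (A : J -> Type)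
    (ALin : forall j, (A j -> Prop) -> Prop)
    (APar : forall j, (A j -> Prop) -> (A j -> Prop) -> Prop),
    (forall j, affine_space (A j) (ALin j) (APar j)) ->
    ~ exists f : cpoint H -> (forall j, A j),
        isomorphism (complement_lines (segre_lines Lin) H)
                    (complement_par (segre_lines Lin) H)
                    (segre_lines ALin) (segre_par ALin APar) f.
Proof.
  intros J A ALin APar Haff [f Hiso].
  destruct HI2 as [i [j Hij]].
  assert (Hpls : forall i, partial_linear_space (P i) (Lin i))
    by (intro k; exact (proj1 (proj1 (Hproj k)))).
  assert (Hthick : forall i, thick (Lin i)) by (intro k; exact (proj1 (proj2 (Hproj k)))).
  assert (Hpar : parallels_exist (complement_lines (segre_lines Lin) H)
                                 (complement_par (segre_lines Lin) H)).
  { apply (parallels_exist_iso _ _ _ _ f Hiso), segre_parallels_exist.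
    intro k. exact (affine_parallels_exist _ _ _ (Haff k)). }
  destruct (hyperplane_noncollinear_pair Lin Hpls Hthick H Hhyp i j Hij)
    as [p [x0 [Hp [Hx0 Hnc]]]].
  destruct (Hspiky p Hp) as [y [Hy [N [HN [Np Ny]]]]].
  apply Hnc, (complement_parallels_collinear _ _ H
                (segre_partial_linear_space Lin (inhabits i) Hpls Hthick)
                (segre_thick Lin Hthick) (proj1 Hhyp) N p x0 Hpar HN Np Hp
                (fun NH => Hy (NH y Ny)) Hx0).
Qed.
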